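(* Consider $N$ nodes communicating over a fixed, undirected, connected graph $\mathcal{G}=(\mathcal{V},\mathcal{E})$ with $\mathcal{V}=\{1,\dots,N\}$ and diameter $d_G$, running the asynchronous distributed logic-AND algorithm described in the context. Assume that for each node $i$ there exists $\bar T_i$ such that the waiting time satisfies $T_i\le \bar T_i$ in every awakening cycle. Suppose that when a flag $C_i$ switches from $0$ to $1$, it remains equal to $1$ indefinitely. Then a node $i$ satisfies $\prod_{b=1}^{d_i}S_i[d_G,b]=1$ in finite time if and only if at a certain time instant one has $C_j=1$ for all $j\in\mathcal{V}$.
   Context: Notation: $\mathcal{N}_i=\{j\in\mathcal{V}:(i,j)\in\mathcal{E}\}\cup\{i\}$ is the set of neighbors of node $i$ including $i$ itself, and $d_i=|\mathcal{N}_i|$. For a matrix $A$, $A[l,j]$ is its $(l,j)$ entry, $A[:,j]$ its $j$-th column, $A[l,:]$ its $l$-th row; writing $A[l,:]\gets 1$ sets all entries of row $l$ to $1$. Asynchronous communication model: each node has a local clock $\tau_i$ and a waiting time $T_i$. While $\tau_i<T_i$ the node is IDLE (it listens for messages from neighbors and may update local variables). When $\tau_i=T_i$ it becomes AWAKE, performs local computations, broadcasts information to its neighbors, resets $\tau_i=0$ and selects a new waiting time $T_i$. Logic-AND algorithm: each node $i$ has a flag $C_i\in\{0,1\}$, initially $0$, and a matrix $S_i\in\{0,1\}^{d_G\times d_i}$, initially zero. The columns of $S_i$ are indexed by the neighbors: node $i$ assigns to each $j\in\mathcal{N}_i\setminus\{i\}$ a column index $j|_i$, and column $d_i$ refers to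 node $i$ itself. When AWAKE, node $i$ does: if $\prod_{l=1}^{d_i}S_i[d_G,l]\neq 1$, set $S_i[1,d_i]\gets C_i$, then set $S_i[l,d_i]\gets\prod_{b=1}^{d_i}S_i[l-1,b]$ for $l=2,\dots,d_G$, and broadcast the column $S_i[:,d_i]$ to all $j\in\mathcal{N}_i\setminus\{i\}$. Then, if $\prod_{l=1}^{d_i}S_i[d_G,l]=1$, node $i$ stops and sends a STOP signal to all $j\in\mathcal{N}_i\setminus\{i\}$. When IDLE, node $i$ does: if a column $S_j[:,d_j]$ is received from $j\in\mathcal{N}_i\setminus\{i\}$ and no STOP signal has been received, set $S_i[l,j|_i]\gets S_j[l,d_j]$ for $l=1,\dots,d_G$; if a STOP signal is received, set $S_i[d_G,:]\gets 1$. *)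

From mathcomp Require Import all_boot.
Set Implicit Arguments. Unset Strict Implicit. Unset Printing Implicit Defensive.

(* Nodes are 'I_N (= {0,..,N-1}, i.e. {1,..,N} shifted).  The graph is a
   boolean adjacency relation [adj] on 'I_N. *)

Section Graph.
Variable N : nat.
Variable adj : rel 'I_N.

Fixpoint reach (k : nat) (i j : 'I_N) : bool :=
  if k is k'.+1 then reach k' i j || [exists m, reach k' i m && adj m j]
  else i == j.

(* graph distance (first k < N with reach k i j; N if none) *)
Definition dist (i j : 'I_N) : nat := find (fun k => reach k i j) (iota 0 N).

Definition diameter : nat := \max_(i : 'I_N) \max_(j : 'I_N) dist i j.

Definition nbr (i : 'I_N) : pred 'I_N := [pred j | (j == i) || adj i j].
End Graph.

Section Alg.
Variable N : nat.
Variable adj : rel 'I_N.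
Variable dG : nat.

(* Local state of a node: the matrix S_i, with rows indexed by l = 1..dG
   and columns indexed directly by the node j in N_i that the column refers
   to (column d_i <-> node i itself, column j|_i <-> node j); a flag telling
   whether the node has stopped, and a flag telling whether a STOP signal
   has been received. *)
Record nstate := NState {
  mat : nat -> 'I_N -> bool;
  stopped : bool;
  stoprec : bool }.

Definition init_state : nstate := NState (fun _ _ => false) false false.

Definition row_one (i : 'I_N) (M : nat -> 'I_N -> bool) (l : nat) : bool :=
  [forall j, (j \in nbr adj i) ==> M l j].

(* New own column S_i[:,d_i] computed when AWAKE: entry 1 is C_i, entry l+1 is
   the product of row l, where the own entry of row l is the freshly
   updated one (sequential loop l = 2..dG). *)
Fixpoint own_col (i : 'I_N) (M : nat -> 'I_N -> bool) (c : bool) (l : nat)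
  : bool :=
  match l with
  | 0 => false
  | 1 => c
  | l'.+1 => [forall b, (b \in nbr adj i) ==>
                 (if b == i then own_col i M c l' else M l' b)]
  end.

Definition own_mat (i : 'I_N) (M : nat -> 'I_N -> bool) (c : bool)
  : nat -> 'I_N -> bool :=
  fun l j => if (j == i) && (0 < l <= dG) then own_col i M c l else M l j.

Definition active (aw : bool) (s : nstate) : bool := aw && ~~ stopped s.

Definition broadcasts (aw : bool) (i : 'I_N) (s : nstate) : bool :=
  active aw s && ~~ row_one i (mat s) dG.

Definition mat_after_own (aw c : bool) (i : 'I_N) (s : nstate) :=
  if broadcasts aw i s then own_mat i (mat s) c else mat s.

Definition sends_stop (aw c : bool) (i : 'I_N) (s : nstate) : bool :=
  active aw s && row_one i (mat_after_own aw c i s) dG.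

(* Awake nodes perform their local
   computation; messages (columns, STOP) sent at this instant are received
   by the neighbours that have not stopped. *)
Definition step (aw C : 'I_N -> bool) (X : 'I_N -> nstate) : 'I_N -> nstate :=
  fun i =>
  let s := X i in
  let M1 := mat_after_own (aw i) (C i) i s in
  if stopped s || sends_stop (aw i) (C i) i s then NState M1 true (stoprec s)
  else
  let stopin := [exists k, [&& adj i k, k != i &
                              sends_stop (aw k) (C k) k (X k)]] in
  let M2 := fun l k =>
    if [&& adj i k, k != i, broadcasts (aw k) k (X k), ~~ stoprec s
         & 0 < l <= dG]
    then own_col k (mat (X k)) (C k) l else M1 l k in
  let M3 := fun l k => if stopin && (l == dG) then true else M2 l k in
  NState M3 false (stoprec s || stopin).

Fixpoint run (aw C : nat -> 'I_N -> bool) (t : nat) : 'I_N -> nstate :=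
  if t is t'.+1 then step (aw t') (C t') (run aw C t')
  else fun _ => init_state.
End Alg.

From Stdlib Require Import Classical.
From mathcomp Require Import all_boot.
Set Implicit Arguments. Unset Strict Implicit. Unset Printing Implicit Defensive.

(* Until all flags are 1, a 1 in row l of the column that any node holds for node j
   certifies that every node within distance l - 1 of j has its flag set: row 1 of an
   own column is the flag, row l + 1 is the product of row l over the closed
   neighbourhood, and a last row filled by STOP comes from a node whose last row was
   already full.  Flags never fall, so this invariant is preserved, and a full row d_G
   covers the whole graph.
   Conversely, let all flags be 1 from time T on.  If some node ever sends STOP, the
   signal spreads along the connected graph and every node stops with a full last row.
   Otherwise no node ever stops or receives STOP, so the copy of a neighbour's column is
   exact, and by induction on l, as every node keeps waking up, all own entries in rows
   1..l are eventually 1 for good.  At its next awakening node i would then find its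
   row d_G full and send STOP, a contradiction. *)

Section Walks.
Variables (N : nat) (adj : rel 'I_N).

Lemma reach_mono n m i k : n <= m -> reach adj n i k -> reach adj m i k.
Proof.
move=> /subnK <-; elim: (m - n) => [|d IH] //= r.
by rewrite (IH r).
Qed.

Lemma reachS_first n i k :
  reach adj n.+1 i k -> exists2 b, b \in nbr adj i & reach adj n b k.
Proof.
elim: n k => [|n IH] k.
  rewrite /= => /orP[/eqP->|/existsP[m /andP[/eqP<- a]]].
    by exists k; rewrite // inE eqxx.
  by exists k; rewrite ?inE ?a ?orbT.
rewrite [reach _ n.+2 _ _]/= => /orP[/IH[b bn r]|/existsP[m /andP[/IH[b bn r] a]]].
  by exists b => //; apply: (reach_mono (leqnSn n)).
by exists b => //=; apply/orP; right; apply/existsP; exists m; rewrite r a.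
Qed.

Lemma reach_path x p : path adj x p -> reach adj (size p) x (last x p).
Proof.
elim/last_ind: p => [|p y IH] /=; first by rewrite eqxx.
rewrite rcons_path => /andP[pp a]; rewrite size_rcons last_rcons /=.
by apply/orP; right; apply/existsP; exists (last x p); rewrite IH.
Qed.

Lemma connect_reach_lt i k : connect adj i k -> exists2 n, n < N & reach adj n i k.
Proof.
move=> /connectP[p pp ->]; case: (shortenP pp) => q qp uq _.
exists (size q); last exact: reach_path.
by have := max_card (mem (i :: q)); rewrite (card_uniqP uq) card_ord.
Qed.

Lemma dist_le_diameter i j : dist adj i j <= diameter adj.
Proof.
apply: leq_trans (leq_bigmax i).
exact: (leq_bigmax (F := fun j => dist adj i j) j).
Qed.

Lemma connect_reach_diameter i k : connect adj i k -> reach adj (diameter adj) i k.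
Proof.
move=> /connect_reach_lt[n n_lt r]; apply: reach_mono (dist_le_diameter i k) _.
have has_reach : has (fun l => reach adj l i k) (iota 0 N).
  by apply/hasP; exists n; rewrite ?mem_iota.
have := nth_find 0 has_reach; rewrite has_find size_iota in has_reach.
by rewrite nth_iota.
Qed.

Lemma diameter_gt0 (i j : 'I_N) : i != j -> 0 < diameter adj.
Proof.
move=> ij; apply: leq_trans (dist_le_diameter i j).
have N_gt0 : 0 < N := leq_ltn_trans (leq0n i) (ltn_ord i).
by rewrite /dist -[X in iota 0 X](prednK N_gt0) /= (negbTE ij).
Qed.

End Walks.

Lemma eventually_forall (T : finType) (P : nat -> T -> Prop) :
  (forall k, exists tk, forall t, tk <= t -> P t k) ->
  exists t0, forall t, t0 <= t -> forall k, P t k.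
Proof.
move=> ev; suff [t0 ev_all] : exists t0, forall t, t0 <= t -> forall k, k \in enum T -> P t k.
  by exists t0 => t t_ge k; apply: ev_all; rewrite ?mem_enum.
elim: (enum T) => [|x s [t0 IH]]; first by exists 0.
have [tx ev_x] := ev x; exists (maxn tx t0) => t; rewrite geq_max => /andP[tx_le t0_le] k.
by rewrite inE => /predU1P[->|k_s]; [apply: ev_x | apply: IH].
Qed.

Section OwnColumn.
Variables (N : nat) (adj : rel 'I_N) (dG : nat).

Definition certifies (c : 'I_N -> bool) (M : nat -> 'I_N -> bool) :=
  forall l j, M l j -> ~~ [forall k, c k] -> forall k, reach adj l.-1 j k -> c k.

Lemma certifies_mono (c1 c2 : 'I_N -> bool) M :
  (forall k, c1 k -> c2 k) -> certifies c1 M -> certifies c2 M.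
Proof.
move=> c12 cert l j Mlj not_all k r; apply/c12/(cert l j Mlj _ k r).
by apply: contra not_all => /forallP all1; apply/forallP => k'; apply/c12.
Qed.

Lemma own_col_certifies c M i l :
  certifies c M -> own_col adj i M (c i) l -> ~~ [forall k, c k] ->
  forall k, reach adj l.-1 i k -> c k.
Proof.
move=> cert; elim: l => [|[|l] IH] //; first by move=> ci _ k /eqP <-.
move=> /forallP col not_all k /reachS_first[b b_nbr r].
have := col b; rewrite b_nbr /=; case: eqP r => [-> r col_l|_ r Mlb].
  exact: IH col_l not_all k r.
exact: cert Mlb not_all k r.
Qed.

Lemma own_mat_certifies c M i :
  certifies c M -> certifies c (own_mat adj dG i M (c i)).
Proof.
move=> cert l j; rewrite /own_mat; case: ifP => [/andP[/eqP-> _]|_].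
  exact: own_col_certifies.
exact: cert.
Qed.

Lemma mat_after_own_certifies c s a i :
  certifies c (mat s) -> certifies c (mat_after_own adj dG a (c i) i s).
Proof. by rewrite /mat_after_own; case: ifP => // _; apply: own_mat_certifies. Qed.

Lemma certified_row_one c M i :
  (forall k, reach adj dG i k) -> 0 < dG -> certifies c M ->
  row_one adj i M dG -> forall k, c k.
Proof.
move=> reach_i dG_gt0 cert /forallP row.
case: (boolP [forall k, c k]) => [/forallP all_set|not_all]; first exact: all_set.
move=> k; have := reach_i k; rewrite -(prednK dG_gt0) => /reachS_first[b b_nbr r].
have Mb : M dG b := implyP (row b) b_nbr.
exact: cert dG b Mb not_all k r.
Qed.

Lemma own_col_one (M : nat -> 'I_N -> bool) i (c : bool) l :
  c -> 0 < l ->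
  (forall l' b, 0 < l' < l -> b \in nbr adj i -> b != i -> M l' b) ->
  own_col adj i M c l.
Proof.
move=> ci; elim: l => [|[|l] IH] // _ nbr_one.
apply/forallP => b; apply/implyP => b_nbr /=; case: eqP => [_|/eqP b_i].
  by apply: IH => // l' b' /andP[l'_gt0 l'_lt]; apply: nbr_one; rewrite l'_gt0 ltnS ltnW.
by apply: nbr_one b_nbr b_i; rewrite ltnSn.
Qed.

End OwnColumn.

Section Run.
Variables (N : nat) (adj : rel 'I_N) (dG : nat) (aw C : nat -> 'I_N -> bool).
Local Notation X t := (run adj dG aw C t).
Local Notation sends_stop_at s k := (sends_stop adj dG (aw s k) (C s k) k (X s k)).

Hypothesis C_mono : forall t i, C t i -> C t.+1 i.

Lemma flag_mono s t k : s <= t -> C s k -> C t k.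
Proof.
apply: (homo_leq (f := C^~ k) (r := fun a b : bool => a -> b)) => // [y x z xy yz /xy/yz //|i].
exact: C_mono.
Qed.

Lemma run_certifies t i :
  (forall i k, reach adj dG i k) -> 0 < dG -> certifies adj (C t) (mat (X t i)).
Proof.
move=> reach_dG dG_gt0; elim: t i => [//|t IH] i.
apply: certifies_mono (C_mono (t := t)) _; rewrite [X t.+1]/= /step.
case: ifP => _ /=; first exact: mat_after_own_certifies.
move=> l j; case: ifP => [/andP[/existsP[k /and3P[_ _ /andP[_ full_k]]] _] _ not_all|_].
  case/negP: not_all; apply/forallP.
  apply: certified_row_one (reach_dG k) dG_gt0 _ full_k.
  exact: mat_after_own_certifies.
case: ifP => _; first exact: own_col_certifies.
exact: mat_after_own_certifies.
Qed.

Lemma stopped_succ t k : stopped (X t k) -> stopped (X t.+1 k).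
Proof. by move=> st; rewrite /= /step st. Qed.

Lemma stopped_row_one t k : stopped (X t k) -> row_one adj k (mat (X t k)) dG.
Proof.
elim: t => [//|t IH]; rewrite /= /step; case: ifP => //= /orP[st|/andP[] //] _.
by rewrite /mat_after_own /broadcasts /active st andbF; apply: IH.
Qed.

Lemma stopped_sent_stop t k : stopped (X t k) -> exists s, sends_stop_at s k.
Proof.
elim: t => [//|t IH]; rewrite /= /step; case: ifP => //= /orP[st|sent] _.
  exact: IH.
by exists t.
Qed.

Lemma sends_stop_stopped s k : sends_stop_at s k -> stopped (X s.+1 k).
Proof. by move=> sent; rewrite /= /step sent orbT. Qed.

(* After receiving STOP a node no longer accepts columns and its last row is full,
   so it stops at its next awakening. *)
Definition stop_secured (x : nstate N) (j : 'I_N) :=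
  stopped x || stoprec x && row_one adj j (mat x) dG.

Lemma stop_secured_of_neighbour s k j :
  adj j k -> k != j -> sends_stop_at s k -> stop_secured (X s.+1 j) j.
Proof.
move=> adj_jk k_j sent; rewrite /stop_secured /= /step.
case: ifP => //= _.
have -> : [exists k0, [&& adj j k0, k0 != j & sends_stop_at s k0]].
  by apply/existsP; exists k; rewrite adj_jk k_j sent.
by rewrite orbT; apply/forallP => b; rewrite eqxx implybT.
Qed.

Lemma stop_secured_succ t j : stop_secured (X t j) j -> stop_secured (X t.+1 j) j.
Proof.
case/orP=> [st|/andP[rec full]]; first by rewrite /stop_secured stopped_succ.
rewrite /stop_secured /= /step; case: ifP => //= _.
have silent : broadcasts adj dG (aw t j) j (X t j) = false.
  by rewrite /broadcasts full andbF.
rewrite rec /=; apply/forallP => b; apply/implyP => b_nbr.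
case: ifP => // _; rewrite !andbF /= /mat_after_own silent.
exact: implyP (forallP full b) b_nbr.
Qed.

Lemma stop_secured_awake t j :
  stop_secured (X t j) j -> aw t j -> stopped (X t.+1 j).
Proof.
case/orP=> [st|/andP[_ full]] awake; first exact: stopped_succ.
have [st|active_j] := boolP (stopped (X t j)); first exact: stopped_succ.
apply: sends_stop_stopped.
have silent : broadcasts adj dG (aw t j) j (X t j) = false.
  by rewrite /broadcasts full andbF.
by rewrite /sends_stop /active /mat_after_own silent awake active_j.
Qed.

Hypothesis wakes : forall i t, exists2 s, t <= s & aw s i.

Lemma stopped_neighbour t k j :
  adj j k -> k != j -> stopped (X t k) -> exists t', stopped (X t' j).
Proof.
move=> adj_jk k_j /stopped_sent_stop[s sent].
have secured n : stop_secured (X (s.+1 + n) j) j.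
  elim: n => [|n IH]; last by rewrite addnS; apply: stop_secured_succ.
  by rewrite addn0; apply: stop_secured_of_neighbour sent.
have [s' s_le awake] := wakes j s.+1.
exists s'.+1; apply: stop_secured_awake awake.
by have := secured (s' - s.+1); rewrite subnKC.
Qed.

Lemma stopped_connect t k j :
  symmetric adj -> irreflexive adj ->
  connect adj k j -> stopped (X t k) -> exists t', stopped (X t' j).
Proof.
move=> adj_sym adj_irr /connectP[p p_path ->].
elim: p k t p_path => [|y p IH] k t /=; first by exists t.
case/andP=> adj_ky p_path st_k.
have k_y : k != y by apply: contraTneq adj_ky => ->; rewrite adj_irr.
have adj_yk : adj y k by rewrite adj_sym.
have [t' st_y] := stopped_neighbour adj_yk k_y st_k.
exact: IH st_y.
Qed.

Section Silent.
Hypothesis silent : forall s k, ~~ sends_stop_at s k.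

Lemma silent_no_stop_received t k :
  [exists k0, [&& adj k k0, k0 != k & sends_stop_at t k0]] = false.
Proof. by apply/existsPn => k0; rewrite (negbTE (silent t k0)) !andbF. Qed.

Lemma silent_unstopped t k : ~~ stopped (X t k) && ~~ stoprec (X t k).
Proof.
elim: t k => [//|t IH] k; have /andP[not_st not_rec] := IH k.
by rewrite /= /step (negbTE not_st) (negbTE (silent t k)) silent_no_stop_received /= orbF.
Qed.

Lemma silent_broadcasts t k : broadcasts adj dG (aw t k) k (X t k) = aw t k.
Proof.
have /andP[not_st _] := silent_unstopped t k; have := silent t k.
rewrite /sends_stop /mat_after_own /broadcasts /active (negbTE not_st) !andbT.
by case: (aw t k) => //=; case E: (row_one adj k (mat (X t k)) dG) => //=; rewrite E.
Qed.

Lemma silent_awake_row_not_one t k : aw t k -> ~~ row_one adj k (mat (X t k)) dG.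
Proof. by move=> awake; have := silent_broadcasts t k; rewrite /broadcasts awake => /andP[]. Qed.

Hypothesis adj_irr : irreflexive adj.

Lemma silent_own_entry_succ t k l : 0 < l <= dG ->
  mat (X t.+1 k) l k =
  if aw t k then own_col adj k (mat (X t k)) (C t k) l else mat (X t k) l k.
Proof.
move=> l_range; have /andP[not_st _] := silent_unstopped t k.
rewrite /= /step (negbTE not_st) (negbTE (silent t k)) silent_no_stop_received /=.
rewrite adj_irr /= /mat_after_own silent_broadcasts.
by case: (aw t k); rewrite // /own_mat eqxx l_range.
Qed.

Lemma silent_copy_exact t i k l : 0 < l <= dG -> adj i k -> k != i ->
  mat (X t i) l k = mat (X t k) l k.
Proof.
move=> l_range adj_ik k_i; elim: t => [//|t IH].
rewrite silent_own_entry_succ //; have /andP[not_st not_rec] := silent_unstopped t i.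
rewrite /= /step (negbTE not_st) (negbTE (silent t i)) silent_no_stop_received /=.
rewrite adj_ik k_i silent_broadcasts not_rec l_range /= /mat_after_own.
case: (aw t k) => //; rewrite -IH; case: ifP => // _.
by rewrite /own_mat (negbTE k_i).
Qed.

Lemma silent_own_entry_set t k l : l < dG -> C t k -> aw t k ->
  (forall b l', 0 < l' <= l -> mat (X t b) l' b) -> mat (X t.+1 k) l.+1 k.
Proof.
move=> l_lt Ck awake own_one; rewrite silent_own_entry_succ ?l_lt // awake.
apply: own_col_one => // l' b /andP[l'_gt0 l'_le] b_nbr b_k.
have adj_kb : adj k b by move: b_nbr; rewrite inE (negbTE b_k).
have l'_range : 0 < l' <= dG by rewrite l'_gt0 ltnW // (leq_trans l'_le).
by rewrite silent_copy_exact // own_one // l'_gt0.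
Qed.

Lemma silent_own_entries_one T l : (forall k, C T k) -> l <= dG ->
  exists2 t0, T <= t0 &
    forall t, t0 <= t -> forall k l', 0 < l' <= l -> mat (X t k) l' k.
Proof.
move=> all_set; elim: l => [|l IH] l_le.
  by exists T => // t _ k l' /andP[/leq_trans le /le].
have [t0 T_le own_one] := IH (ltnW l_le).
have set_from t k : t0 <= t -> aw t k -> mat (X t.+1 k) l.+1 k.
  move=> t0_le awake; apply: silent_own_entry_set awake _ => //.
    exact: flag_mono (leq_trans T_le t0_le) (all_set k).
  exact: own_one.
have [t1 own_l1] : exists t1, forall t, t1 <= t -> forall k, mat (X t k) l.+1 k.
  apply: eventually_forall => k; have [s t0_le awake] := wakes k t0.
  exists s.+1 => t /subnK <-; elim: (t - s.+1) => [|n IHn]; first exact: set_from.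
  have t0_le' : t0 <= n + s.+1 by rewrite (leq_trans t0_le) // -addSnnS leq_addl.
  rewrite addSn; case awake': (aw (n + s.+1) k); first exact: set_from.
  by rewrite silent_own_entry_succ ?l_le // awake'.
exists (maxn t0 t1); first by rewrite (leq_trans T_le) ?leq_maxl.
move=> t; rewrite geq_max => /andP[t0_le t1_le] k l' /andP[l'_gt0].
by rewrite leq_eqVlt ltnS => /predU1P[->|l'_le]; [apply: own_l1 | apply: own_one; rewrite ?l'_gt0].
Qed.

Lemma silent_flags_never_all_set T (i : 'I_N) : 0 < dG -> ~ (forall k, C T k).
Proof.
move=> dG_gt0 all_set; have [t0 _ own_one] := silent_own_entries_one all_set (leqnn dG).
have [s t0_le awake] := wakes i t0.
case/negP: (silent_awake_row_not_one awake); apply/forallP => b; apply/implyP => b_nbr.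
have dG_range : 0 < dG <= dG by rewrite dG_gt0 leqnn.
have [-> | b_i] := eqVneq b i; first exact: own_one.
have adj_ib : adj i b by move: b_nbr; rewrite inE (negbTE b_i).
by rewrite silent_copy_exact // own_one.
Qed.
End Silent.
End Run.

Theorem proposition1 (N : nat) (adj : rel 'I_N)
    (aw : nat -> 'I_N -> bool) (C : nat -> 'I_N -> bool) :
  1 < N ->
  symmetric adj -> irreflexive adj ->
  (forall i j : 'I_N, connect adj i j) ->
  (forall i, exists Tb, forall t, exists2 s, t <= s <= t + Tb & aw s i) ->
  (forall i, C 0 i = false) ->
  (forall t i, C t i -> C t.+1 i) ->
  forall i : 'I_N,
    (exists t, row_one adj i
        (mat (run adj (diameter adj) aw C t i)) (diameter adj))
    <-> (exists t, forall j, C t j).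
Proof.
move=> N_gt1 adj_sym adj_irr adj_conn bounded_wait _ C_mono i.
have wakes j t : exists2 s, t <= s & aw s j.
  by have [Tb /(_ t)[s /andP[t_le _] awake]] := bounded_wait j; exists s.
have reach_dG j k : reach adj (diameter adj) j k by apply: connect_reach_diameter.
have dG_gt0 : 0 < diameter adj.
  by apply: (@diameter_gt0 _ _ (Ordinal (ltnW N_gt1)) (Ordinal N_gt1)).
split=> [[t full] | [T all_set]].
  exists t.
  exact: certified_row_one (reach_dG i) dG_gt0 (run_certifies C_mono reach_dG dG_gt0) full.
have [[s [k sent]] | silent] :=
  classic (exists s k, sends_stop adj (diameter adj) (aw s k) (C s k) k
                         (run adj (diameter adj) aw C s k)).
  have [t st_i] := stopped_connect wakes adj_sym adj_irr (adj_conn k i) (sends_stop_stopped sent).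
  by exists t; apply: stopped_row_one.
have never_sent s k : ~~ sends_stop adj (diameter adj) (aw s k) (C s k) k
                                    (run adj (diameter adj) aw C s k).
  by apply/negP => sent; apply: silent; exists s, k.
by case: (silent_flags_never_all_set C_mono wakes never_sent adj_irr i dG_gt0 all_set).
Qed.
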